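(* There exists a topologically mixing homeomorphism of a compact metric space that has the L-shadowing property and has no periodic points.
   Context: L-shadowing for a homeomorphism $f$ of a compact metric space $(X,d)$: for every $\varepsilon>0$ there is $\delta>0$ such that every sequence $(x_k)_{k\in\mathbb{Z}}$ with $d(f(x_k),x_{k+1})\le\delta$ for all $k$ and $d(f(x_k),x_{k+1})\to0$ as $|k|\to\infty$ admits $z\in X$ with $d(f^k(z),x_k)\le\varepsilon$ for all $k$ and $d(f^k(z),x_k)\to0$ as $|k|\to\infty$. $f$ is topologically mixing if for all nonempty open $U,V$ there is $n>0$ with $f^k(U)\cap V\ne\emptyset$ for all $k\ge n$. *)

From Stdlib Require Import Reals ZArith List.
Open Scope R_scope.

Definition is_metric {X : Type} (d : X -> X -> R) : Prop :=
  (forall x y, 0 <= d x y) /\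
  (forall x y, d x y = 0 <-> x = y) /\
  (forall x y, d x y = d y x) /\
  (forall x y z, d x z <= d x y + d y z).

Definition is_open {X : Type} (d : X -> X -> R) (U : X -> Prop) : Prop :=
  forall x, U x -> exists r, 0 < r /\ forall y, d x y < r -> U y.

Definition compact_metric {X : Type} (d : X -> X -> R) : Prop :=
  forall (I : Type) (U : I -> X -> Prop),
    (forall i, is_open d (U i)) ->
    (forall x, exists i, U i x) ->
    exists l : list I, forall x, exists i, In i l /\ U i x.

Definition continuous {X : Type} (d : X -> X -> R) (f : X -> X) : Prop :=
  forall x eps, 0 < eps -> exists delta, 0 < delta /\
    forall y, d x y < delta -> d (f x) (f y) < eps.

Definition homeomorphism {X : Type} (d : X -> X -> R) (f g : X -> X) : Prop :=
  continuous d f /\ continuous d g /\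
  (forall x, g (f x) = x) /\ (forall x, f (g x) = x).

Fixpoint iter {X : Type} (n : nat) (f : X -> X) (x : X) : X :=
  match n with O => x | S m => f (iter m f x) end.

Definition iterZ {X : Type} (f g : X -> X) (k : Z) (x : X) : X :=
  if (0 <=? k)%Z then iter (Z.to_nat k) f x else iter (Z.to_nat (- k)) g x.

Definition tends_to_0_Z (a : Z -> R) : Prop :=
  forall eps, 0 < eps -> exists N : Z, forall k, (N <= Z.abs k)%Z -> Rabs (a k) < eps.

Definition topologically_mixing {X : Type} (d : X -> X -> R) (f : X -> X) : Prop :=
  forall U V : X -> Prop, is_open d U -> is_open d V ->
    (exists u, U u) -> (exists v, V v) ->
    exists n : nat, (0 < n)%nat /\
      forall k : nat, (n <= k)%nat -> exists x, U x /\ V (iter k f x).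

Definition L_shadowing {X : Type} (d : X -> X -> R) (f g : X -> X) : Prop :=
  forall eps, 0 < eps -> exists delta, 0 < delta /\
    forall xs : Z -> X,
      (forall k, d (f (xs k)) (xs (k + 1)%Z) <= delta) ->
      tends_to_0_Z (fun k => d (f (xs k)) (xs (k + 1)%Z)) ->
      exists z, (forall k, d (iterZ f g k z) (xs k) <= eps) /\
                tends_to_0_Z (fun k => d (iterZ f g k z) (xs k)).

Definition no_periodic_points {X : Type} (f : X -> X) : Prop :=
  forall (x : X) (n : nat), (0 < n)%nat -> iter n f x <> x.

(* The space is a product over [m : nat] of skew products over the full 2-shift: the [m]-th
   factor is [Z/(m+1) x {0,1}^Z] with [T (a, w) = (a + 1 + w_0, shift w)]. Two points agree
   to level [n] when the first [n] labels, and the bits at positions [|j| < n] of the first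
   [n] factors, coincide; the distance [2^-n] built from this is a compact ultrametric for
   which [T] is a homeomorphism.
   Mixing: the bit patterns of [u] around time [0] and of [v] around time [k] can be
   spliced, and for [k] large a block of ones in between adjusts each label so that it
   reaches that of [v] at time [k].
   L-shadowing: on the factor [m] a pseudo-orbit with errors tending to [0] is eventually
   an exact orbit, say outside the time window [-K, K) with [K > m]. The shadowing point
   copies the bits of the pseudo-orbit outside the window and, inside it, uses a block of
   at most [m] ones to steer its label from the value of the pseudo-orbit at time [-K] to
   the value at time [K]. *)

From Pilot Require Import Defs.
From Stdlib Require Import Reals ZArith Bool List Lia Lra Classical ClassicalEpsilon
  FunctionalExtensionality ProofIrrelevance.

Definition halfpow (n : nat) : R := (/ 2) ^ n.

Lemma halfpow_pos n : 0 < halfpow n.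
Proof. apply pow_lt; lra. Qed.

Lemma halfpow_le a b : (a <= b)%nat -> halfpow b <= halfpow a.
Proof.
  induction 1; [lra|]. change (halfpow (S m)) with (/ 2 * halfpow m).
  pose proof (halfpow_pos m); lra.
Qed.

Lemma halfpow_le_inv a b : halfpow b <= halfpow a -> (a <= b)%nat.
Proof.
  intro H. destruct (le_lt_dec a b) as [|Hba]; auto.
  apply halfpow_le in Hba. change (halfpow (S b)) with (/ 2 * halfpow b) in Hba.
  pose proof (halfpow_pos b); lra.
Qed.

Lemma halfpow_small r : 0 < r -> exists n, halfpow n < r.
Proof.
  intro Hr. destruct (pow_lt_1_zero (/ 2)) with r as [N HN]; auto.
  { rewrite Rabs_pos_eq; lra. }
  exists N. specialize (HN N (le_n _)). rewrite Rabs_pos_eq in HN; auto.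
  left; apply halfpow_pos.
Qed.

Section GradedAgreement.

Variable X : Type.
Variable agree : nat -> X -> X -> Prop.

Hypothesis agree_0 : forall x y, agree 0 x y.
Hypothesis agree_refl : forall n x, agree n x x.
Hypothesis agree_sym : forall n x y, agree n x y -> agree n y x.
Hypothesis agree_trans : forall n x y z, agree n x y -> agree n y z -> agree n x z.
Hypothesis agree_pred : forall n x y, agree (S n) x y -> agree n x y.
Hypothesis agree_separates : forall x y, (forall n, agree n x y) -> x = y.

Lemma agree_mono n n' x y : (n' <= n)%nat -> agree n x y -> agree n' x y.
Proof. intros Hle H. induction Hle as [|m Hle IH]; [exact H | apply IH, agree_pred, H]. Qed.

Definition dist (x y : X) : R :=
  match excluded_middle_informative (forall n, agree n x y) with
  | left _ => 0
  | right _ => halfpow (epsilon (inhabits 0%nat) (fun k => agree k x y /\ ~ agree (S k) x y))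
  end.

Lemma dist_cases x y :
  (dist x y = 0 /\ forall n, agree n x y) \/
  exists k, dist x y = halfpow k /\ agree k x y /\ ~ agree (S k) x y.
Proof.
  unfold dist. destruct excluded_middle_informative as [Hall|Hnot]; [left; auto|right].
  eexists; split; [reflexivity|]. apply epsilon_spec.
  apply NNPP; intro Hno. apply Hnot. intro n; induction n; auto.
  apply NNPP; intro HS. eauto.
Qed.

Lemma dist_le x y n : dist x y <= halfpow n <-> agree n x y.
Proof.
  destruct (dist_cases x y) as [[-> Hall]|[k [-> [Hk HSk]]]].
  - split; auto. intros _; left; apply halfpow_pos.
  - split; intro H.
    + apply agree_mono with k; auto. apply halfpow_le_inv, H.
    + apply halfpow_le. destruct (le_lt_dec n k); auto.
      exfalso; apply HSk, agree_mono with n; auto.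
Qed.

Lemma dist_lt x y n : dist x y < halfpow n -> agree (S n) x y.
Proof.
  destruct (dist_cases x y) as [[-> Hall]|[k [-> [Hk _]]]]; auto.
  intro H. apply agree_mono with k; auto.
  destruct (le_lt_dec k n) as [Hkn|]; auto.
  apply halfpow_le in Hkn; lra.
Qed.

Lemma dist_nonneg x y : 0 <= dist x y.
Proof.
  destruct (dist_cases x y) as [[-> _]|[k [-> _]]]; [lra|]. left; apply halfpow_pos.
Qed.

Lemma dist_eq0 x y : (forall n, agree n x y) -> dist x y = 0.
Proof.
  intro H. destruct (dist_cases x y) as [[-> _]|[k [_ [_ HSk]]]]; auto.
  exfalso; auto.
Qed.

Lemma dist_le_of_agree_impl x y x' y' :
  (forall n, agree n x y -> agree n x' y') -> dist x' y' <= dist x y.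
Proof.
  intro H. destruct (dist_cases x y) as [[-> Hall]|[k [-> [Hk _]]]].
  - rewrite dist_eq0; auto; lra.
  - apply dist_le; auto.
Qed.

Lemma dist_ultrametric x y z : dist x z <= Rmax (dist x y) (dist y z).
Proof.
  destruct (dist_cases x y) as [[-> Hxy]|[a [-> [Ha _]]]].
  { apply agree_separates in Hxy; subst y. apply Rmax_r. }
  destruct (dist_cases y z) as [[-> Hyz]|[b [-> [Hb _]]]].
  { apply agree_separates in Hyz; subst z.
    rewrite Rmax_left by (left; apply halfpow_pos). apply dist_le; auto. }
  destruct (le_lt_dec a b) as [Hab|Hba].
  - rewrite Rmax_left by (apply halfpow_le; auto).
    apply dist_le. apply agree_trans with y; auto. apply agree_mono with b; auto.
  - rewrite Rmax_right by (apply halfpow_le; lia).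
    apply dist_le. apply agree_trans with y; auto. apply agree_mono with a; auto; lia.
Qed.

Lemma dist_is_metric : is_metric dist.
Proof.
  split; [|split; [|split]].
  - apply dist_nonneg.
  - intros x y; split.
    + intro H. apply agree_separates. intro n. apply dist_le. rewrite H.
      left; apply halfpow_pos.
    + intros <-. apply dist_eq0; auto.
  - intros x y. apply Rle_antisym; apply dist_le_of_agree_impl; auto.
  - intros x y z. pose proof (dist_ultrametric x y z).
    pose proof (dist_nonneg x y); pose proof (dist_nonneg y z).
    unfold Rmax in *; destruct Rle_dec; lra.
Qed.

Lemma open_cylinder U x : is_open dist U -> U x -> exists n, forall y, agree n x y -> U y.
Proof.
  intros HU Hx. destruct (HU x Hx) as [r [Hr Hball]].
  destruct (halfpow_small r Hr) as [n Hn].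
  exists n. intros y Hy. apply Hball. apply dist_le in Hy. lra.
Qed.

Lemma continuous_of_agree (h : X -> X) :
  (forall n x y, agree (S n) x y -> agree n (h x) (h y)) -> continuous dist h.
Proof.
  intros Hh x eps Heps. destruct (halfpow_small eps Heps) as [n Hn].
  exists (halfpow n); split; [apply halfpow_pos|]. intros y Hy.
  apply dist_lt, Hh, dist_le in Hy. lra.
Qed.

Lemma mixing_of_agree (f : X -> X) :
  (forall n, exists N, forall k u v, (N <= k)%nat ->
     exists x, agree n u x /\ agree n v (Defs.iter k f x)) ->
  topologically_mixing dist f.
Proof.
  intros Hmix U V HU HV [u Hu] [v Hv].
  destruct (open_cylinder U u HU Hu) as [n1 H1].
  destruct (open_cylinder V v HV Hv) as [n2 H2].
  destruct (Hmix (Nat.max n1 n2)) as [N HN].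
  exists (S N); split; [lia|]. intros k Hk.
  destruct (HN k u v ltac:(lia)) as [x [Hux Hvx]].
  exists x; split.
  - apply H1, agree_mono with (Nat.max n1 n2); auto; lia.
  - apply H2, agree_mono with (Nat.max n1 n2); auto; lia.
Qed.

Definition eventually_agree (a b : Z -> X) : Prop :=
  forall n, exists K, forall k, (K <= Z.abs k)%Z -> agree n (a k) (b k).

Lemma tends_to_0_dist (a b : Z -> X) :
  tends_to_0_Z (fun k => dist (a k) (b k)) <-> eventually_agree a b.
Proof.
  split.
  - intros H n. destruct (H (halfpow n) (halfpow_pos n)) as [K HK].
    exists K. intros k Hk. apply agree_pred, dist_lt.
    specialize (HK k Hk). rewrite Rabs_pos_eq in HK; auto. apply dist_nonneg.
  - intros H eps Heps. destruct (halfpow_small eps Heps) as [n Hn].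
    destruct (H n) as [K HK]. exists K. intros k Hk.
    rewrite Rabs_pos_eq by apply dist_nonneg.
    apply Rle_lt_trans with (halfpow n); auto. apply dist_le; auto.
Qed.

Lemma L_shadowing_of_agree (f g : X -> X) :
  (forall N (xs : Z -> X),
     (forall k, agree N (f (xs k)) (xs (k + 1)%Z)) ->
     eventually_agree (fun k => f (xs k)) (fun k => xs (k + 1)%Z) ->
     exists z, (forall k, agree N (iterZ f g k z) (xs k)) /\
               eventually_agree (fun k => iterZ f g k z) xs) ->
  L_shadowing dist f g.
Proof.
  intros Hsh eps Heps. destruct (halfpow_small eps Heps) as [N HN].
  exists (halfpow N); split; [apply halfpow_pos|]. intros xs Hstep Htend.
  destruct (Hsh N xs) as [z [Hz Hzt]].
  - intro k. apply dist_le, Hstep.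
  - apply tends_to_0_dist, Htend.
  - exists z; split.
    + intro k. apply Rlt_le, Rle_lt_trans with (halfpow N); auto. apply dist_le, Hz.
    + apply (tends_to_0_dist (fun k => iterZ f g k z) xs), Hzt.
Qed.

Section Compactness.

Hypothesis agree_finite_coordinates : forall n,
  exists cs : list ((X -> Z) * list Z),
    (forall c x, In c cs -> In (fst c x) (snd c)) /\
    (forall x y, (forall c, In c cs -> fst c x = fst c y) -> agree n x y).

Hypothesis coherent_limits : forall ys : nat -> X,
  (forall n, agree n (ys n) (ys (S n))) -> exists x, forall n, agree n x (ys n).

Variables (I : Type) (U : I -> X -> Prop).

Definition covered (Q : X -> Prop) : Prop :=
  exists l : list I, forall x, Q x -> exists i, In i l /\ U i x.

Lemma covered_pieces {V : Type} (R : V -> X -> Prop) (vs : list V) :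
  (forall v, In v vs -> covered (R v)) -> covered (fun x => exists v, In v vs /\ R v x).
Proof.
  induction vs as [|w vs IH]; intro Hvs.
  - exists nil. intros x [v [[] _]].
  - destruct (Hvs w (or_introl eq_refl)) as [l1 H1].
    destruct IH as [l2 H2]; [intros v Hv; apply Hvs; right; exact Hv|].
    exists (l1 ++ l2). intros x [v [[<-|Hv] HR]].
    + destruct (H1 x HR) as [i [Hi HU]]. exists i; split; auto. apply in_or_app; auto.
    + destruct (H2 x (ex_intro _ v (conj Hv HR))) as [i [Hi HU]].
      exists i; split; auto. apply in_or_app; auto.
Qed.

Lemma uncovered_piece {V : Type} (Q : X -> Prop) (R : V -> X -> Prop) (vs : list V) :
  ~ covered Q -> (forall x, Q x -> exists v, In v vs /\ R v x) ->
  exists v, ~ covered (fun x => Q x /\ R v x).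
Proof.
  intros HQ Hsplit. apply NNPP; intro Hall. apply HQ.
  destruct (covered_pieces (fun v x => Q x /\ R v x) vs) as [l Hl].
  - intros v _. apply NNPP; intro Hv. eauto.
  - exists l. intros x Hx. apply Hl. destruct (Hsplit x Hx) as [v [Hv HR]]. eauto.
Qed.

Lemma uncovered_nonempty (Q : X -> Prop) : ~ covered Q -> exists y, Q y.
Proof. intro H. apply NNPP; intro Hno. apply H. exists nil. intros x Hx. exfalso; eauto. Qed.

Lemma uncovered_fiber (cs : list ((X -> Z) * list Z)) :
  (forall c x, In c cs -> In (fst c x) (snd c)) ->
  forall Q, ~ covered Q ->
  exists y, Q y /\ ~ covered (fun x => Q x /\ forall c, In c cs -> fst c x = fst c y).
Proof.
  intro Hcs. induction cs as [|c cs IH]; intros Q HQ.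
  - destruct (uncovered_nonempty Q HQ) as [y Hy]. exists y; split; auto.
    intros [l Hl]. apply HQ. exists l. intros x Hx. apply Hl. split; auto. intros _ [].
  - destruct (uncovered_piece Q (fun v x => fst c x = v) (snd c) HQ) as [v Hv].
    { intros x _. exists (fst c x); split; auto. apply Hcs; left; auto. }
    destruct (IH (fun c' x Hc' => Hcs c' x (or_intror Hc')) _ Hv) as [y [[Hy Hcy] Hfib]].
    exists y; split; auto. intros [l Hl]. apply Hfib. exists l. intros x [[Hx Hcx] Hcsx].
    apply Hl. split; auto. intros c' [<-|Hc']; auto. congruence.
Qed.

Lemma uncovered_refine n y :
  ~ covered (agree n y) -> exists y', agree n y y' /\ ~ covered (agree (S n) y').
Proof.
  intro H. destruct (agree_finite_coordinates (S n)) as [cs [Hcs Hagree]].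
  destruct (uncovered_fiber cs Hcs _ H) as [y' [Hy' Hfib]].
  exists y'; split; auto. intros [l Hl]. apply Hfib. exists l. intros x [_ Hx].
  apply Hl, Hagree. intros c Hc. symmetry; auto.
Qed.

Definition refine_step (n : nat) (y : X) : X :=
  epsilon (inhabits y) (fun y' => ~ covered (agree n y) ->
                                  agree n y y' /\ ~ covered (agree (S n) y')).

Fixpoint descent (y0 : X) (n : nat) : X :=
  match n with O => y0 | S n => refine_step n (descent y0 n) end.

Lemma refine_step_spec n y : ~ covered (agree n y) ->
  agree n y (refine_step n y) /\ ~ covered (agree (S n) (refine_step n y)).
Proof.
  intro Hy. apply (epsilon_spec (inhabits y) (fun y' => ~ covered (agree n y) ->
                     agree n y y' /\ ~ covered (agree (S n) y'))); auto.
  destruct (uncovered_refine n y Hy) as [y' Hy']. exists y'; auto.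
Qed.

Lemma descent_spec y0 : ~ covered (agree 0 y0) -> forall n,
  ~ covered (agree n (descent y0 n)) /\ agree n (descent y0 n) (descent y0 (S n)).
Proof.
  intros H0 n. induction n as [|n [IH _]]; simpl.
  - split; [exact H0 | apply refine_step_spec, H0].
  - destruct (refine_step_spec n _ IH) as [_ HS]. split; [exact HS|].
    apply refine_step_spec, HS.
Qed.

Lemma compact_of_agree : (forall i, is_open dist (U i)) -> (forall x, exists i, U i x) ->
  exists l : list I, forall x, exists i, In i l /\ U i x.
Proof.
  intros Hopen Hcover. apply NNPP; intro Hno.
  assert (Hall : ~ covered (fun _ => True)).
  { intros [l Hl]. apply Hno. exists l. intro x. apply Hl; auto. }
  destruct (uncovered_nonempty _ Hall) as [y0 _].
  assert (H0 : ~ covered (agree 0 y0)).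
  { intros [l Hl]. apply Hall. exists l. intros x _. apply Hl; auto. }
  pose proof (descent_spec y0 H0) as Hd.
  destruct (coherent_limits (descent y0)) as [x Hx]; [intro n; apply Hd|].
  destruct (Hcover x) as [i Hi]. destruct (open_cylinder (U i) x (Hopen i) Hi) as [n Hn].
  apply (proj1 (Hd n)). exists (i :: nil). intros y Hy. exists i; split; [left; auto|].
  apply Hn. apply agree_trans with (descent y0 n); auto.
Qed.

End Compactness.

End GradedAgreement.

Section IntegerIterates.

Variables (X : Type) (f g : X -> X).
Hypothesis f_g : forall x, f (g x) = x.

Lemma iterZ_succ k x : iterZ f g (k + 1) x = f (iterZ f g k x).
Proof.
  unfold iterZ. destruct (0 <=? k)%Z eqn:Hk.
  - apply Z.leb_le in Hk. replace (0 <=? k + 1)%Z with true by (symmetry; apply Z.leb_le; lia).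
    rewrite Z2Nat.inj_add, Nat.add_comm by lia. reflexivity.
  - apply Z.leb_gt in Hk. replace (Z.to_nat (- k)) with (S (Z.to_nat (- (k + 1)))) by lia.
    simpl. rewrite f_g. destruct (0 <=? k + 1)%Z eqn:Hk1; [|reflexivity].
    apply Z.leb_le in Hk1. replace (k + 1)%Z with 0%Z by lia. reflexivity.
Qed.

Lemma iterZ_of_nat (n : nat) x : iterZ f g (Z.of_nat n) x = Defs.iter n f x.
Proof.
  unfold iterZ. rewrite Nat2Z.id.
  replace (0 <=? Z.of_nat n)%Z with true by (symmetry; apply Z.leb_le; lia). reflexivity.
Qed.

End IntegerIterates.

Lemma Z_succ_ind (Q : Z -> Prop) :
  Q 0%Z -> (forall k, Q k -> Q (k + 1)%Z) -> (forall k, Q (k + 1)%Z -> Q k) -> forall k, Q k.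
Proof.
  intros H0 Hup Hdown. apply Z.peano_ind; auto.
  intros k Hk. apply Hdown. now replace (Z.pred k + 1)%Z with k by lia.
Qed.

Open Scope Z_scope.
Open Scope bool_scope.

Lemma bounded_on_lt (n : nat) (h : nat -> Z) : exists B, forall m, (m < n)%nat -> h m <= B.
Proof.
  induction n as [|n [B HB]]; [exists 0; intros; lia|].
  exists (Z.max B (h n)). intros m Hm. destruct (Nat.eq_dec m n) as [->|]; [lia|].
  specialize (HB m ltac:(lia)). lia.
Qed.

Definition modulus (m : nat) : Z := Z.of_nat m + 1.

Lemma modulus_pos m : 0 < modulus m.
Proof. unfold modulus; lia. Qed.

Lemma modulus_neq0 m : modulus m <> 0.
Proof. unfold modulus; lia. Qed.

Lemma mod_modulus_range (a : Z) m : 0 <= a mod modulus m < modulus m.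
Proof. apply Z.mod_pos_bound, modulus_pos. Qed.


Record point := mkpoint {
  label : nat -> Z;
  bits : nat -> Z -> bool;
  label_range : forall m, 0 <= label m < modulus m }.

Lemma point_ext x y :
  (forall m, label x m = label y m) -> (forall m j, bits x m j = bits y m j) -> x = y.
Proof.
  destruct x as [l1 b1 r1], y as [l2 b2 r2]; simpl; intros Hl Hb.
  assert (l1 = l2) as <- by (apply functional_extensionality; auto).
  assert (b1 = b2) as <-.
  { apply functional_extensionality; intro m; apply functional_extensionality; auto. }
  f_equal. apply proof_irrelevance.
Qed.

Definition T (x : point) : point :=
  mkpoint (fun m => (label x m + 1 + Z.b2z (bits x m 0)) mod modulus m)
          (fun m j => bits x m (j + 1))
          (fun m => mod_modulus_range _ m).

Definition Tinv (x : point) : point :=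
  mkpoint (fun m => (label x m - 1 - Z.b2z (bits x m (-1))) mod modulus m)
          (fun m j => bits x m (j - 1))
          (fun m => mod_modulus_range _ m).

Lemma label_mod x m : label x m mod modulus m = label x m.
Proof. apply Z.mod_small, label_range. Qed.

Lemma Tinv_T x : Tinv (T x) = x.
Proof.
  apply point_ext; simpl.
  - intro m. replace (-1 + 1) with 0 by lia.
    replace (_ mod modulus m - 1 - _) with
      ((label x m + 1 + Z.b2z (bits x m 0)) mod modulus m - (1 + Z.b2z (bits x m 0))) by ring.
    rewrite Zminus_mod_idemp_l.
    replace (label x m + 1 + Z.b2z (bits x m 0) - (1 + Z.b2z (bits x m 0))) with (label x m)
      by ring.
    apply label_mod.
  - intros m j. f_equal; lia.
Qed.

Lemma T_Tinv x : T (Tinv x) = x.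
Proof.
  apply point_ext; simpl.
  - intro m. replace (0 - 1) with (-1) by lia.
    rewrite <- Z.add_assoc, Z.add_mod_idemp_l by apply modulus_neq0.
    replace (label x m - 1 - Z.b2z (bits x m (-1)) + (1 + Z.b2z (bits x m (-1))))
      with (label x m) by ring.
    apply label_mod.
  - intros m j. f_equal; lia.
Qed.

Definition agree (n : nat) (x y : point) : Prop :=
  (forall m, (m < n)%nat -> label x m = label y m) /\
  (forall m j, (m < n)%nat -> Z.abs j < Z.of_nat n -> bits x m j = bits y m j).

Lemma agree_0 x y : agree 0 x y.
Proof. split; intros; lia. Qed.

Lemma agree_refl n x : agree n x x.
Proof. split; auto. Qed.

Lemma agree_sym n x y : agree n x y -> agree n y x.
Proof. intros [Hl Hb]; split; intros; symmetry; auto. Qed.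

Lemma agree_trans n x y z : agree n x y -> agree n y z -> agree n x z.
Proof. intros [Hl1 Hb1] [Hl2 Hb2]; split; intros; [rewrite Hl1 | rewrite Hb1]; auto. Qed.

Lemma agree_pred n x y : agree (S n) x y -> agree n x y.
Proof. intros [Hl Hb]; split; intros; [apply Hl | apply Hb]; lia. Qed.

Lemma agree_separates x y : (forall n, agree n x y) -> x = y.
Proof.
  intro H. apply point_ext.
  - intro m. apply (H (S m)); lia.
  - intros m j. apply (H (S (Nat.max m (Z.to_nat (Z.abs j))))); lia.
Qed.

Lemma agree_le n n' x y : (n' <= n)%nat -> agree n x y -> agree n' x y.
Proof. exact (agree_mono _ _ agree_pred n n' x y). Qed.

Definition pdist : point -> point -> R := dist point agree.

Lemma pdist_is_metric : is_metric pdist.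
Proof.
  exact (dist_is_metric _ _ agree_0 agree_refl agree_sym agree_trans agree_pred
           agree_separates).
Qed.

Lemma T_agree n x y : agree (S n) x y -> agree n (T x) (T y).
Proof.
  intros [Hl Hb]; split; simpl.
  - intros m Hm. rewrite Hl, Hb by lia. reflexivity.
  - intros m j Hm Hj. apply Hb; lia.
Qed.

Lemma Tinv_agree n x y : agree (S n) x y -> agree n (Tinv x) (Tinv y).
Proof.
  intros [Hl Hb]; split; simpl.
  - intros m Hm. rewrite Hl, Hb by lia. reflexivity.
  - intros m j Hm Hj. apply Hb; lia.
Qed.

Lemma T_homeomorphism : homeomorphism pdist T Tinv.
Proof.
  split; [|split; [|split]].
  - exact (continuous_of_agree _ _ agree_0 agree_pred T T_agree).
  - exact (continuous_of_agree _ _ agree_0 agree_pred Tinv Tinv_agree).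
  - apply Tinv_T.
  - apply T_Tinv.
Qed.

Definition window (n : nat) : list Z := map (fun i => Z.of_nat i - Z.of_nat n) (seq 0 (2 * n)).

Definition coordinates (n : nat) : list ((point -> Z) * list Z) :=
  map (fun m => (fun x => label x m, map Z.of_nat (seq 0 (S m)))) (seq 0 n) ++
  flat_map (fun m => map (fun j => (fun x => Z.b2z (bits x m j), 0 :: 1 :: nil)) (window n))
           (seq 0 n).

Lemma coordinates_range n c x : In c (coordinates n) -> In (fst c x) (snd c).
Proof.
  unfold coordinates. rewrite in_app_iff, in_map_iff, in_flat_map.
  intros [[m [<- _]] | [m [_ Hc]]]; cbn [fst snd].
  - apply in_map_iff. exists (Z.to_nat (label x m)).
    pose proof (label_range x m) as Hr; unfold modulus in Hr.
    rewrite in_seq; split; lia.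
  - apply in_map_iff in Hc as [j [<- _]]. cbn [fst snd]. destruct (bits x m j); simpl; auto.
Qed.

Lemma agree_of_coordinates n x y :
  (forall c, In c (coordinates n) -> fst c x = fst c y) -> agree n x y.
Proof.
  intro H; split.
  - intros m Hm. apply (H (fun x => label x m, map Z.of_nat (seq 0 (S m)))).
    apply in_or_app; left. apply in_map_iff. exists m; split; [reflexivity|apply in_seq; lia].
  - intros m j Hm Hj. apply Z.b2z_inj.
    apply (H (fun x => Z.b2z (bits x m j), 0 :: 1 :: nil)).
    apply in_or_app; right. apply in_flat_map. exists m; split; [apply in_seq; lia|].
    apply in_map_iff. exists j; split; [reflexivity|].
    apply in_map_iff. exists (Z.to_nat (j + Z.of_nat n)). rewrite in_seq; split; lia.
Qed.

Lemma agree_complete (ys : nat -> point) :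
  (forall n, agree n (ys n) (ys (S n))) -> exists x, forall n, agree n x (ys n).
Proof.
  intro Hys.
  assert (Hchain : forall p q, (p <= q)%nat -> agree p (ys p) (ys q)).
  { induction 1; [apply agree_refl|].
    apply agree_trans with (ys m); auto. apply agree_le with m; auto. }
  set (level m j := S (Nat.max m (Z.to_nat (Z.abs j)))).
  exists (mkpoint (fun m => label (ys (S m)) m) (fun m j => bits (ys (level m j)) m j)
                  (fun m => label_range (ys (S m)) m)).
  intro n; split; simpl.
  - intros m Hm. apply (Hchain (S m) n); lia.
  - intros m j Hm Hj. apply (Hchain (level m j) n); unfold level; lia.
Qed.

Lemma pdist_compact : compact_metric pdist.
Proof.
  intros I U.
  apply (compact_of_agree _ _ agree_0 agree_trans agree_pred); [|exact agree_complete].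
  intro n. exists (coordinates n).
  split; [intros c x; apply coordinates_range | apply agree_of_coordinates].
Qed.

Fixpoint ones (p : Z) (n : nat) (b : Z -> bool) : Z :=
  match n with O => 0 | S n => ones p n b + Z.b2z (b (p + Z.of_nat n)) end.

Definition ones_to (k : Z) (b : Z -> bool) : Z :=
  if 0 <=? k then ones 0 (Z.to_nat k) b else - ones k (Z.to_nat (- k)) b.

Lemma ones_bound p n b : 0 <= ones p n b <= Z.of_nat n.
Proof. induction n; simpl; [lia|]. destruct (b (p + Z.of_nat n)); simpl; lia. Qed.

Lemma ones_cons p n b : ones p (S n) b = Z.b2z (b p) + ones (p + 1) n b.
Proof.
  induction n; simpl in *; [rewrite Z.add_0_r; ring|].
  rewrite IHn. replace (p + 1 + Z.of_nat n) with (p + Z.pos (Pos.of_succ_nat n)) by lia. ring.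
Qed.

Lemma ones_app p a c b : ones p (a + c) b = ones p a b + ones (p + Z.of_nat a) c b.
Proof.
  induction c; simpl; [rewrite Nat.add_0_r; ring|].
  rewrite Nat.add_succ_r; simpl. rewrite IHc, Nat2Z.inj_add, Z.add_assoc. ring.
Qed.

Lemma ones_prefix p n b t : 0 <= t ->
  (forall i, (i < n)%nat -> b (p + Z.of_nat i) = (Z.of_nat i <? t)) ->
  ones p n b = Z.min (Z.of_nat n) t.
Proof.
  intro Ht; induction n; simpl; intro H; [lia|].
  rewrite IHn, H by auto. destruct (Z.ltb_spec (Z.of_nat n) t); simpl; lia.
Qed.

Lemma ones_orb p n b c :
  (forall i, (i < n)%nat -> b (p + Z.of_nat i) && c (p + Z.of_nat i) = false) ->
  ones p n (fun j => b j || c j) = ones p n b + ones p n c.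
Proof.
  induction n; simpl; intro H; [lia|]. rewrite IHn by auto.
  specialize (H n (Nat.lt_succ_diag_r n)).
  destruct (b (p + Z.of_nat n)), (c (p + Z.of_nat n)); simpl in *; try discriminate; lia.
Qed.

Lemma ones_to_succ k b : ones_to (k + 1) b = ones_to k b + Z.b2z (b k).
Proof.
  unfold ones_to. destruct (Z.leb_spec 0 k).
  - replace (0 <=? k + 1) with true by (symmetry; apply Z.leb_le; lia).
    rewrite Z2Nat.inj_add, Nat.add_1_r by lia. simpl. rewrite Z2Nat.id by lia. reflexivity.
  - replace (Z.to_nat (- k)) with (S (Z.to_nat (- (k + 1)))) by lia. rewrite ones_cons.
    destruct (Z.leb_spec 0 (k + 1)).
    + replace (Z.to_nat (k + 1)) with O by lia. replace (Z.to_nat (- (k + 1))) with O by lia.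
      simpl. lia.
    + lia.
Qed.

Lemma ones_to_add p n b : ones_to (p + Z.of_nat n) b = ones_to p b + ones p n b.
Proof.
  induction n; [simpl; rewrite Z.add_0_r; ring|].
  rewrite Nat2Z.inj_succ, <- Z.add_1_r, Z.add_assoc, ones_to_succ, IHn. simpl. ring.
Qed.

Lemma ones_to_of_nat n b : ones_to (Z.of_nat n) b = ones 0 n b.
Proof. exact (ones_to_add 0 n b). Qed.

Lemma mod_add_cancel_r a b c M : M <> 0 -> (a + c) mod M = (b + c) mod M -> a mod M = b mod M.
Proof.
  intros HM H. replace a with (a + c - c) by ring. replace b with (b + c - c) by ring.
  rewrite <- Zminus_mod_idemp_l, H, Zminus_mod_idemp_l. reflexivity.
Qed.

Notation Tz k := (iterZ T Tinv k).

Lemma Tz_succ k x : Tz (k + 1) x = T (Tz k x).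
Proof. apply iterZ_succ, T_Tinv. Qed.

Lemma bits_Tz k x m j : bits (Tz k x) m j = bits x m (j + k).
Proof.
  revert j. induction k using Z_succ_ind; intro j.
  - f_equal; lia.
  - rewrite Tz_succ. simpl. rewrite IHk. f_equal; lia.
  - specialize (IHk (j - 1)). rewrite Tz_succ in IHk. simpl in IHk.
    replace (j - 1 + 1) with j in IHk by lia. rewrite IHk. f_equal; lia.
Qed.

Lemma label_Tz k x m :
  label (Tz k x) m = (label x m + k + ones_to k (bits x m)) mod modulus m.
Proof.
  induction k using Z_succ_ind.
  - rewrite Z.add_0_r, Z.add_0_r. symmetry; apply label_mod.
  - rewrite Tz_succ. simpl. rewrite IHk, bits_Tz, Z.add_0_l, ones_to_succ, <- Z.add_assoc.
    rewrite Z.add_mod_idemp_l by apply modulus_neq0. f_equal. ring.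
  - rewrite Tz_succ in IHk. simpl in IHk. rewrite bits_Tz, Z.add_0_l, ones_to_succ in IHk.
    rewrite <- (label_mod (Tz k x) m).
    apply (mod_add_cancel_r _ _ (1 + Z.b2z (bits x m k))); [apply modulus_neq0|].
    rewrite Z.add_assoc, IHk. f_equal. ring.
Qed.

Lemma mod_add_neq a s M : 0 <= a < M -> 0 < s < M -> (a + s) mod M <> a.
Proof.
  intros Ha Hs. destruct (Z.lt_ge_cases (a + s) M).
  - rewrite Z.mod_small; lia.
  - replace (a + s) with (a + s - M + 1 * M) by ring.
    rewrite Z.mod_add, Z.mod_small; lia.
Qed.

(* On the factor [m = 2n], [n] steps advance the label by [n] plus at most [n] ones,
   a nonzero amount modulo [2n + 1]. *)
Lemma T_aperiodic : no_periodic_points T.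
Proof.
  intros x n Hn Hper. rewrite <- (iterZ_of_nat _ T Tinv) in Hper.
  set (m := (2 * n)%nat).
  apply (mod_add_neq (label x m) (Z.of_nat n + ones 0 n (bits x m)) (modulus m)).
  - apply label_range.
  - pose proof (ones_bound 0 n (bits x m)). unfold modulus, m in *. lia.
  - rewrite <- ones_to_of_nat, Z.add_assoc, <- label_Tz, Hper. reflexivity.
Qed.

Section Mixing.

Variables (n k : nat) (u v : point).

Definition splice (m : nat) (j : Z) : bool :=
  if Z.abs j <? Z.of_nat n then bits u m j
  else if Z.abs (j - Z.of_nat k) <? Z.of_nat n then bits v m (j - Z.of_nat k)
  else false.

(* The number of extra ones that make the label of the factor [m] travel from [label u m]
   to [label v m] in [k] steps; for [m < n] they fit in the gap between the two windows. *)
Definition correction (m : nat) : Z :=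
  (label v m - label u m - Z.of_nat k - ones 0 k (splice m)) mod modulus m.

Definition padding (m : nat) (j : Z) : bool :=
  (Z.of_nat n <=? j) && (j <? Z.of_nat n + correction m).

Definition mixer : point :=
  mkpoint (label u) (fun m j => splice m j || padding m j) (label_range u).

Lemma padding_true m j : padding m j = true <-> Z.of_nat n <= j < Z.of_nat n + correction m.
Proof. unfold padding. rewrite andb_true_iff, Z.leb_le, Z.ltb_lt. reflexivity. Qed.

Lemma correction_small m : (m < n)%nat -> 0 <= correction m < Z.of_nat n.
Proof.
  intro Hm. assert (0 <= correction m < modulus m) by apply mod_modulus_range.
  unfold modulus in *. lia.
Qed.

Lemma mixer_agree_u : agree n u mixer.
Proof.
  split; [reflexivity|]. intros m j Hm Hj. simpl.
  replace (padding m j) with false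
    by (symmetry; apply not_true_iff_false; rewrite padding_true; lia).
  unfold splice. replace (Z.abs j <? Z.of_nat n) with true by (symmetry; apply Z.ltb_lt; lia).
  symmetry; apply orb_false_r.
Qed.

Hypothesis k_large : (3 * n + 1 <= k)%nat.

Lemma ones_padding m : (m < n)%nat -> ones 0 k (padding m) = correction m.
Proof.
  intro Hm. pose proof (correction_small m Hm).
  replace k with (n + (k - n))%nat by lia. rewrite ones_app.
  rewrite (ones_prefix 0 n _ 0), (ones_prefix _ _ _ (correction m)); try lia.
  - intros i Hi. apply eq_true_iff_eq. rewrite padding_true, Z.ltb_lt. lia.
  - intros i Hi. replace (Z.of_nat i <? 0) with false by (symmetry; apply Z.ltb_ge; lia).
    apply not_true_iff_false. rewrite padding_true. lia.
Qed.

Lemma splice_padding_disjoint m j : (m < n)%nat -> splice m j && padding m j = false.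
Proof.
  intro Hm. pose proof (correction_small m Hm).
  destruct (padding m j) eqn:Hp; [|apply andb_false_r].
  apply padding_true in Hp. unfold splice.
  replace (Z.abs j <? Z.of_nat n) with false by (symmetry; apply Z.ltb_ge; lia).
  replace (Z.abs (j - Z.of_nat k) <? Z.of_nat n) with false by (symmetry; apply Z.ltb_ge; lia).
  reflexivity.
Qed.

Lemma mixer_agree_v : agree n v (Tz (Z.of_nat k) mixer).
Proof.
  split.
  - intros m Hm. rewrite label_Tz, ones_to_of_nat. simpl.
    rewrite ones_orb, ones_padding by (auto; intros; apply splice_padding_disjoint; auto).
    unfold correction. rewrite Z.add_assoc, Z.add_mod_idemp_r by apply modulus_neq0.
    replace (label u m + Z.of_nat k + ones 0 k (splice m) +
             (label v m - label u m - Z.of_nat k - ones 0 k (splice m))) with (label v m)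
      by ring.
    symmetry; apply label_mod.
  - intros m j Hm Hj. rewrite bits_Tz. simpl. pose proof (correction_small m Hm).
    replace (padding m (j + Z.of_nat k)) with false
      by (symmetry; apply not_true_iff_false; rewrite padding_true; lia).
    rewrite orb_false_r. unfold splice.
    replace (Z.abs (j + Z.of_nat k) <? Z.of_nat n) with false
      by (symmetry; apply Z.ltb_ge; lia).
    replace (Z.abs (j + Z.of_nat k - Z.of_nat k) <? Z.of_nat n) with true
      by (symmetry; apply Z.ltb_lt; lia).
    f_equal; ring.
Qed.

End Mixing.

Lemma T_mixing : topologically_mixing pdist T.
Proof.
  apply (mixing_of_agree _ _ agree_0 agree_pred).
  intro n. exists (3 * n + 1)%nat. intros k u v Hk.
  exists (mixer n k u v); split; [apply mixer_agree_u|].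
  rewrite <- (iterZ_of_nat _ T Tinv). apply mixer_agree_v, Hk.
Qed.

Lemma label_T_eq x y m :
  label x m = label y m -> bits x m 0 = bits y m 0 -> label (T x) m = label (T y) m.
Proof. simpl. intros -> ->. reflexivity. Qed.

Lemma label_T_eq_inv x y m :
  label (T x) m = label (T y) m -> bits x m 0 = bits y m 0 -> label x m = label y m.
Proof.
  simpl. intros H Hb. rewrite Hb in H. rewrite <- (label_mod x), <- (label_mod y).
  apply (mod_add_cancel_r _ _ (1 + Z.b2z (bits y m 0))); [apply modulus_neq0|].
  rewrite !Z.add_assoc. exact H.
Qed.

Section Shadowing.

Variable xs : Z -> point.

Lemma bits_along l m k (n : nat) : (m < l)%nat ->
  (forall i, k <= i < k + Z.of_nat n -> agree l (T (xs i)) (xs (i + 1))) ->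
  forall p, - Z.of_nat l < p -> p + Z.of_nat n < Z.of_nat l ->
  bits (xs (k + Z.of_nat n)) m p = bits (xs k) m (p + Z.of_nat n).
Proof.
  intros Hm. induction n as [|n IH]; intros Hsteps p Hp Hpn.
  - simpl. rewrite !Z.add_0_r. reflexivity.
  - replace (k + Z.of_nat (S n)) with (k + Z.of_nat n + 1) by lia.
    destruct (Hsteps (k + Z.of_nat n) ltac:(lia)) as [_ Hb].
    rewrite <- Hb by lia. simpl.
    rewrite IH; [f_equal; lia | intros; apply Hsteps; lia | lia | lia].
Qed.

Lemma bits_chain l m k j : (m < l)%nat -> Z.abs j < Z.of_nat l ->
  (forall i, Z.min k (k + j) <= i < Z.max k (k + j) -> agree l (T (xs i)) (xs (i + 1))) ->
  bits (xs (k + j)) m 0 = bits (xs k) m j.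
Proof.
  intros Hm Hj Hsteps. destruct (Z.le_gt_cases 0 j).
  - pose proof (bits_along l m k (Z.to_nat j) Hm) as Hal. rewrite Z2Nat.id in Hal by lia.
    rewrite Hal by (try intros; try apply Hsteps; lia). reflexivity.
  - pose proof (bits_along l m (k + j) (Z.to_nat (- j)) Hm) as Hal.
    rewrite Z2Nat.id in Hal by lia. replace (k + j + - j) with k in Hal by ring.
    rewrite Hal by (try intros; try apply Hsteps; lia). f_equal; ring.
Qed.

Variable radius : nat -> Z.

(* On the factor [m], the shadowing point follows [xs] outside the time window
   [-radius m, radius m); inside it, a block of [deficit m] ones followed by zeros
   steers the label from that of [xs (-radius m)] to that of [xs (radius m)]. *)
Definition deficit (m : nat) : Z :=
  (label (xs (radius m)) m - label (xs (- radius m)) m - 2 * radius m) mod modulus m.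

Definition shadow_bits (m : nat) (j : Z) : bool :=
  if (- radius m <=? j) && (j <? radius m) then j + radius m <? deficit m
  else bits (xs j) m 0.

Definition shadow_label (m : nat) : Z :=
  label (xs (- radius m)) m + radius m - ones_to (- radius m) (shadow_bits m).

Definition shadow : point :=
  mkpoint (fun m => shadow_label m mod modulus m) shadow_bits
          (fun m => mod_modulus_range (shadow_label m) m).

Lemma shadow_bits_outside m j :
  j < - radius m \/ radius m <= j -> shadow_bits m j = bits (xs j) m 0.
Proof.
  intro Hj. unfold shadow_bits.
  destruct (Z.leb_spec (- radius m) j), (Z.ltb_spec j (radius m)); simpl; auto; lia.
Qed.

Lemma label_shadow_left m : label (Tz (- radius m) shadow) m = label (xs (- radius m)) m.
Proof.
  rewrite label_Tz. simpl. rewrite <- Z.add_assoc, Z.add_mod_idemp_l by apply modulus_neq0.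
  unfold shadow_label.
  replace (label (xs (- radius m)) m + radius m - ones_to (- radius m) (shadow_bits m) +
           (- radius m + ones_to (- radius m) (shadow_bits m)))
    with (label (xs (- radius m)) m) by ring.
  apply label_mod.
Qed.

Hypothesis radius_nonneg : forall m, 0 <= radius m.
Hypothesis radius_large : forall m, radius m = 0 \/ Z.of_nat m + 1 <= radius m.

Lemma deficit_range m : 0 <= deficit m <= 2 * radius m.
Proof.
  destruct (radius_large m) as [H0|H1].
  - unfold deficit. rewrite H0. replace (- 0) with 0 by ring.
    rewrite Z.sub_diag, Z.sub_0_r, Z.mod_0_l by apply modulus_neq0. lia.
  - assert (0 <= deficit m < modulus m) by apply mod_modulus_range.
    unfold modulus in *. lia.
Qed.

Lemma ones_to_shadow m :
  ones_to (radius m) (shadow_bits m) = ones_to (- radius m) (shadow_bits m) + deficit m.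
Proof.
  pose proof (deficit_range m). pose proof (radius_nonneg m).
  replace (radius m) with (- radius m + Z.of_nat (Z.to_nat (2 * radius m))) at 1
    by (rewrite Z2Nat.id; lia).
  rewrite ones_to_add, (ones_prefix _ _ _ (deficit m)); [rewrite Z2Nat.id; lia | lia |].
  intros i Hi. unfold shadow_bits.
  destruct (Z.leb_spec (- radius m) (- radius m + Z.of_nat i)),
           (Z.ltb_spec (- radius m + Z.of_nat i) (radius m)); simpl; lia.
Qed.

Lemma label_shadow_right m : label (Tz (radius m) shadow) m = label (xs (radius m)) m.
Proof.
  rewrite label_Tz, ones_to_shadow. simpl.
  rewrite <- Z.add_assoc, Z.add_mod_idemp_l by apply modulus_neq0.
  unfold shadow_label, deficit.
  set (L := label (xs (- radius m)) m). set (L' := label (xs (radius m)) m).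
  set (o := ones_to (- radius m) (shadow_bits m)).
  replace (L + radius m - o + (radius m + (o + (L' - L - 2 * radius m) mod modulus m)))
    with (L + 2 * radius m + (L' - L - 2 * radius m) mod modulus m) by ring.
  rewrite Z.add_mod_idemp_r by apply modulus_neq0.
  replace (L + 2 * radius m + (L' - L - 2 * radius m)) with L' by ring.
  apply label_mod.
Qed.

Hypothesis steps_exact_outside : forall m k, radius m <= k \/ k < - radius m ->
  agree (S m) (T (xs k)) (xs (k + 1)).

Lemma bits_shadow_outside m k : radius m <= k \/ k < - radius m ->
  bits (Tz k shadow) m 0 = bits (xs k) m 0.
Proof. intro Hk. rewrite bits_Tz, Z.add_0_l. apply shadow_bits_outside; lia. Qed.

Lemma label_shadow_outside m k : radius m <= k \/ k <= - radius m ->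
  label (Tz k shadow) m = label (xs k) m.
Proof.
  intros [Hk|Hk]; revert k Hk.
  - apply Z.right_induction; [intros ? ? ->; reflexivity | apply label_shadow_right |].
    intros k Hk IH. unfold Z.succ. rewrite Tz_succ.
    destruct (steps_exact_outside m k (or_introl Hk)) as [Hl _].
    rewrite <- (Hl m) by lia. apply label_T_eq; auto. apply bits_shadow_outside; lia.
  - apply Z.left_induction; [intros ? ? ->; reflexivity | apply label_shadow_left |].
    intros k Hk IH. unfold Z.succ in IH. rewrite Tz_succ in IH.
    destruct (steps_exact_outside m k (or_intror Hk)) as [Hl _].
    rewrite <- (Hl m) in IH by lia. apply label_T_eq_inv in IH; auto.
    apply bits_shadow_outside; lia.
Qed.

Lemma shadow_agree N : (forall m, (m < N)%nat -> radius m = 0) ->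
  (forall k, agree N (T (xs k)) (xs (k + 1))) ->
  forall k, agree N (Tz k shadow) (xs k).
Proof.
  intros Hrad Hsteps k. split.
  - intros m Hm. apply label_shadow_outside. rewrite Hrad by auto. lia.
  - intros m j Hm Hj. rewrite bits_Tz, shadow_bits_outside by (rewrite Hrad by auto; lia).
    rewrite Z.add_comm. apply bits_chain with N; auto.
Qed.

Lemma shadow_eventually_agree :
  eventually_agree point agree (fun k => T (xs k)) (fun k => xs (k + 1)) ->
  eventually_agree point agree (fun k => Tz k shadow) xs.
Proof.
  intros Hev n. destruct (Hev n) as [K HK]. destruct (bounded_on_lt n radius) as [B HB].
  exists (Z.max K B + Z.of_nat n). intros k Hk. split.
  - intros m Hm. apply label_shadow_outside. specialize (HB m Hm). lia.
  - intros m j Hm Hj. specialize (HB m Hm). rewrite bits_Tz, shadow_bits_outside by lia.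
    rewrite Z.add_comm. apply bits_chain with n; auto. intros i Hi. apply HK. lia.
Qed.

End Shadowing.

Lemma T_L_shadowing : L_shadowing pdist T Tinv.
Proof.
  apply (L_shadowing_of_agree _ _ agree_0 agree_sym agree_pred).
  intros N xs Hsteps Hev.
  destruct (choice (fun m K => forall k, K <= Z.abs k -> agree (S m) (T (xs k)) (xs (k + 1))))
    as [Kexact HKexact]; [intro m; apply Hev|].
  set (radius m := if (m <? N)%nat then 0 else Z.max (Z.of_nat m + 1) (Kexact m)).
  assert (Hsmall : forall m, (m < N)%nat -> radius m = 0).
  { intros m Hm. unfold radius. apply Nat.ltb_lt in Hm. rewrite Hm. reflexivity. }
  assert (Hlarge : forall m, (N <= m)%nat -> radius m = Z.max (Z.of_nat m + 1) (Kexact m)).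
  { intros m Hm. unfold radius. apply Nat.ltb_ge in Hm. rewrite Hm. reflexivity. }
  assert (Hexact : forall m k, radius m <= k \/ k < - radius m ->
                     agree (S m) (T (xs k)) (xs (k + 1))).
  { intros m k Hk. destruct (Nat.lt_ge_cases m N) as [Hm|Hm].
    - apply agree_le with N; auto.
    - apply HKexact. rewrite Hlarge in Hk by auto. lia. }
  assert (Hnonneg : forall m, 0 <= radius m).
  { intro m. destruct (Nat.lt_ge_cases m N); [rewrite Hsmall | rewrite Hlarge]; auto; lia. }
  assert (Hrange : forall m, radius m = 0 \/ Z.of_nat m + 1 <= radius m).
  { intro m. destruct (Nat.lt_ge_cases m N); [rewrite Hsmall | rewrite Hlarge]; auto; lia. }
  exists (shadow xs radius). split.
  - apply shadow_agree; auto.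
  - apply shadow_eventually_agree; auto.
Qed.

Definition origin : point :=
  mkpoint (fun _ => 0) (fun _ _ => false) (fun m => conj (Z.le_refl 0) (modulus_pos m)).

Theorem theoremC :
  exists (X : Type) (d : X -> X -> R) (f g : X -> X),
    is_metric d /\ compact_metric d /\ inhabited X /\
    homeomorphism d f g /\
    topologically_mixing d f /\
    L_shadowing d f g /\
    no_periodic_points f.
Proof.
  exists point, pdist, T, Tinv.
  exact (conj pdist_is_metric (conj pdist_compact (conj (inhabits origin)
          (conj T_homeomorphism (conj T_mixing (conj T_L_shadowing T_aperiodic)))))).
Qed.
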